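(* Let $f:\mathbb{R}^n_{>0}\to\mathbb{R}^n_{>0}$ be order-preserving, homogeneous, real analytic, and multiplicatively convex. Then $\mathcal{G}(f)=\mathcal{G}(f'(x))$ for every $x\in\mathbb{R}^n_{>0}$.
   Context: Entrywise order. Order-preserving: $x\le y\Rightarrow f(x)\le f(y)$; homogeneous: $f(tx)=tf(x)$ for $t>0$; real analytic: each entry real analytic on $\mathbb{R}^n_{>0}$; multiplicatively convex: each entry of $\log\circ f\circ\exp$ is convex. $\mathcal{G}(f)$ is the directed graph on $[n]=\{1,\dots,n\}$ with an arc $i\to j$ when $\lim_{t\to\infty}f(\exp(te_{\{j\}}))_i=\infty$ ($e_{\{j\}}$ the $j$-th standard basis vector). For a nonnegative matrix $A=[a_{ij}]$ (here the Jacobian $f'(x)$), $\mathcal{G}(A)$ is the directed graph on $[n]$ with an arc $i\to j$ when $a_{ij}\ne0$. *)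

From mathcomp Require Import all_boot all_order all_algebra.
From mathcomp Require Import all_classical all_reals all_analysis.
Set Implicit Arguments. Unset Strict Implicit. Unset Printing Implicit Defensive.
Import Order.TTheory GRing.Theory Num.Theory.
Import numFieldNormedType.Exports.
Local Open Scope classical_set_scope.
Local Open Scope ring_scope.

Section Defs.
Variables (R : realType) (n : nat).
Notation vec := ('I_n -> R).

Definition pos_vec (x : vec) : Prop := forall i, 0 < x i.

Definition vle (x y : vec) : Prop := forall i, x i <= y i.

Definition order_preserving (f : vec -> vec) : Prop :=
  forall x y, pos_vec x -> pos_vec y -> vle x y -> vle (f x) (f y).

Definition homogeneous (f : vec -> vec) : Prop :=
  forall (t : R) x, 0 < t -> pos_vec x -> f (fun k => t * x k) = (fun k => t * f x k).

(* each entry of log o f o exp is convex on R^n *)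
Definition mult_convex (f : vec -> vec) : Prop :=
  forall i (u v : vec) (l : R), 0 <= l <= 1 ->
    ln (f (fun k => expR (l * u k + (1 - l) * v k)) i)
      <= l * ln (f (fun k => expR (u k)) i) + (1 - l) * ln (f (fun k => expR (v k)) i).

(* degree-<= N partial sum of the multivariate power series with
   coefficients c, at increment h:  sum_{|a| <= N} c_a h^a *)
Definition pser_partial (c : ('I_n -> nat) -> R) (h : vec) (N : nat) : R :=
  \sum_(a : {ffun 'I_n -> 'I_N.+1} | (\sum_k (a k : nat) <= N)%N)
     c (fun k => (a k : nat)) * \prod_k h k ^+ (a k).

Definition pser_abs_partial (c : ('I_n -> nat) -> R) (h : vec) (N : nat) : R :=
  \sum_(a : {ffun 'I_n -> 'I_N.+1} | (\sum_k (a k : nat) <= N)%N)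
     `|c (fun k => (a k : nat))| * \prod_k `|h k| ^+ (a k).

(* g is real analytic at x (relative to the positive cone): on a
   neighbourhood of x it is the sum of an absolutely convergent power series
   centred at x *)
Definition real_analytic_at (g : vec -> R) (x : vec) : Prop :=
  exists2 r : R, 0 < r &
  exists c : ('I_n -> nat) -> R,
    forall y : vec, pos_vec y -> (forall k, `|y k - x k| < r) ->
      (exists M : R, forall N, pser_abs_partial c (fun k => y k - x k) N <= M) /\
      (pser_partial c (fun k => y k - x k) N @[N --> \oo] --> g y).

Definition real_analytic (f : vec -> vec) : Prop :=
  forall i x, pos_vec x -> real_analytic_at (fun y => f y i) x.

Definition exp_unit (j : 'I_n) (t : R) : vec :=
  fun k => if k == j then expR t else 1.

Definition arcG (f : vec -> vec) (i j : 'I_n) : Prop :=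
  f (exp_unit j t) i @[t --> +oo] --> +oo.

Definition jacobian (f : vec -> vec) (x : vec) (i j : 'I_n) : R :=
  derive1 (fun t : R => f (fun k => x k + (if k == j then t else 0)) i) 0.

Definition arcJ (f : vec -> vec) (x : vec) (i j : 'I_n) : Prop :=
  jacobian f x i j != 0.

End Defs.

(* Fix x, i, j and put psi s = f_i(x + s e_j), G t = f_i(x exp(t e_j)) = psi (x_j (e^t - 1)).
   By homogeneity and monotonicity f_i(exp(t e_j)) and G t agree up to constant factors, so
   i -> j is an arc of G(f) iff G t -> +oo; multiplicative convexity says that ln G is convex,
   and it is nondecreasing.  If f'(x)_ij = psi'(0) <> 0 then G increases somewhere, and a
   convex function that increases somewhere tends to +oo.  If psi'(0) = 0 then psi is flat to
   second order at 0, so the convex nondecreasing ln G has right derivative 0 at 0 and is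
   constant on (-oo, 0]; thus psi is constant on (-x_j, 0], hence on (-x_j, +oo) by the
   identity theorem for the power series of psi, and G is bounded. *)

From Pilot Require Import Defs.
From mathcomp Require Import all_boot all_order all_algebra.
From mathcomp Require Import all_classical all_reals all_analysis.
From mathcomp Require Import ring lra.
Set Implicit Arguments. Unset Strict Implicit. Unset Printing Implicit Defensive.
Import Order.TTheory GRing.Theory Num.Theory.
Import numFieldNormedType.Exports.
Local Open Scope ring_scope.

Lemma ler_term_sum (R : numDomainType) (I : finType) (u : I -> R) :
  (forall l, 0 <= u l) -> forall k, u k <= \sum_l u l.
Proof. by move=> u0 k; rewrite (bigD1 k) //= lerDl sumr_ge0. Qed.

Section RealFieldFacts.
Variable R : realFieldType.
Local Open Scope classical_set_scope.

Lemma le0_of_le_linear (a B e : R) :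
  0 < e -> (forall h, 0 < h < e -> a <= B * h) -> a <= 0.
Proof.
move=> e0 aB.
have Bh : B * h @[h --> 0^'+] --> 0.
  rewrite -[X in _ --> X](mulr0 B); apply: cvgM; first exact: cvg_cst.
  exact/cvg_at_right_filter/cvg_id.
apply: (ler_cvg_to (cvg_cst a) Bh); near=> h; apply: aB; apply/andP; split.
  by near: h; exact: nbhs_right_gt.
by near: h; exact: nbhs_right_lt.
Unshelve. all: by end_near.
Qed.

Lemma derive1_quadratic_bound (phi : R -> R) (a K rho : R) : 0 < rho ->
  (forall h, `|h| <= rho -> `|phi h - phi 0 - a * h| <= K * `|h| ^+ 2) ->
  derive1 phi 0 = a.
Proof.
move=> rho0 phi_bound; apply: cvg_lim => //; apply/cvgrPdist_le => eps eps0.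
have K1 : 0 < `|K| + 1 by rewrite ltr_wpDl.
have d0 : 0 < Num.min rho (eps / (`|K| + 1)) by rewrite lt_min rho0 divr_gt0.
near=> h.
have h0 : 0 < `|h| by rewrite normr_gt0; near: h; exact: nbhs_dnbhs_neq.
have : `|h| <= Num.min rho (eps / (`|K| + 1)) by near: h; exact: dnbhs0_le.
rewrite le_min ler_pdivlMr // => /andP[/phi_bound hK hKe].
have -> : a - h^-1 *: (phi (h + 0) - phi 0) = - ((phi h - phi 0 - a * h) / h).
  by rewrite addr0 -[_ *: _]/(h^-1 * _); field; rewrite -normr_gt0.
rewrite normrN normf_div ler_pdivrMr //; apply: le_trans hK _.
have KK : K <= `|K| + 1 by rewrite (le_trans (ler_norm K)) ?lerDl.
rewrite expr2 mulrA; apply: ler_wpM2r; first exact: ltW.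
by apply: le_trans hKe; rewrite mulrC ler_wpM2l // ltW.
Unshelve. all: by end_near.
Qed.

End RealFieldFacts.

Section ExpLn.
Variable R : realType.

Lemma ln_sub_le (a b : R) : 0 < a -> 0 < b -> ln a - ln b <= (a - b) / b.
Proof.
move=> a0 b0; rewrite -ln_div ?posrE //.
have -> : a / b = 1 + (a - b) / b by rewrite mulrBl divff ?gt_eqF // addrC subrK.
apply: le_ln1Dx; rewrite mulrBl divff ?gt_eqF // ltrBrDl subrr.
exact: divr_gt0.
Qed.

Lemma expR_sub1_le (h : R) : expR h - 1 <= h * expR h.
Proof.
have := expR_ge1Dx (- h); rewrite -(ler_pM2r (expR_gt0 h)) -expRD addNr expR0.
by rewrite mulrDl mul1r mulNr; lra.
Qed.

End ExpLn.

Section Convexity.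
Variable R : realFieldType.
Local Open Scope classical_set_scope.

Definition convex_fun (phi : R -> R) : Prop :=
  forall s t l, 0 <= l <= 1 ->
    phi (l * s + (1 - l) * t) <= l * phi s + (1 - l) * phi t.

Variable phi : R -> R.
Hypothesis phi_convex : convex_fun phi.

Lemma convex_chord_le a b c : a < b -> b <= c ->
  (phi b - phi a) * (c - a) <= (phi c - phi a) * (b - a).
Proof.
move=> ab bc; have ca : 0 < c - a by lra.
set l := (b - a) / (c - a).
have l01 : 0 <= l <= 1.
  by rewrite divr_ge0 ?ler_pdivrMr ?mul1r; lra.
have bE : l * c + (1 - l) * a = b by rewrite /l; field; lra.
have := @phi_convex c a l l01; rewrite bE => phi_b.
have -> : b - a = l * (c - a) by rewrite /l divfK ?gt_eqF.
rewrite mulrA ler_pM2r //; lra.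
Qed.

Lemma convex_cvgy a b : a < b -> phi a < phi b -> phi t @[t --> +oo] --> +oo.
Proof.
move=> ab phi_ab; set d := (phi b - phi a) / (b - a).
have d0 : 0 < d by rewrite divr_gt0 ?subr_gt0.
apply: (@ger_cvgy _ _ _ _ (fun t => d * (t + (phi a / d - a)))).
  near=> t; have bt : b <= t by near: t; apply: nbhs_pinfty_ge; exact: num_real.
  have := @convex_chord_le a b t ab bt.
  rewrite -ler_pdivrMr ?subr_gt0 // mulrAC -/d => chord.
  have -> : d * (t + (phi a / d - a)) = d * (t - a) + phi a.
    by field; rewrite gt_eqF.
  lra.
exact/gt0_cvgMry/cvg_addrr.
Unshelve. all: by end_near.
Qed.

Lemma convex_flat_left (K e : R) : {homo phi : s t / s <= t} -> 0 < e ->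
  (forall h, 0 < h < e -> phi h - phi 0 <= K * h ^+ 2) ->
  forall t, t <= 0 -> phi t = phi 0.
Proof.
move=> phi_homo e0 phi_flat t; rewrite le_eqVlt => /orP[/eqP -> // | t0].
have phi_t : phi t <= phi 0 by apply: phi_homo; exact: ltW.
suff : phi 0 - phi t <= 0 by lra.
apply: (@le0_of_le_linear _ _ (- t * K) e e0) => h /andP[h0 he].
have flat_h : phi h - phi 0 <= K * h ^+ 2 by apply: phi_flat; rewrite h0 he.
(* The chord inequality through t < 0 < h gives (phi 0 - phi t) h <= (phi h - phi 0) (- t). *)
have chord := @convex_chord_le t 0 h t0 (ltW h0).
have nt : 0 <= - t by lra.
rewrite -(ler_pM2r h0) -mulrA -expr2; have := ler_wpM2l nt flat_h; nra.
Qed.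

End Convexity.

Section PowerSeries.
Variable R : realType.
Local Open Scope classical_set_scope.

Definition pser_repr (phi : R -> R) (b : nat -> R) (rho M : R) : Prop :=
  [/\ 0 < rho, forall N, \sum_(m < N.+1) `|b m| * rho ^+ m <= M &
      forall h, `|h| <= rho -> \sum_(m < N.+1) b m * h ^+ m @[N --> \oo] --> phi h].

Definition power_series_at (phi : R -> R) (s : R) : Prop :=
  exists b rho M, pser_repr (fun h => phi (s + h)) b rho M.

Section Representation.
Variables (phi : R -> R) (b : nat -> R) (rho M : R).
Hypothesis phi_pser : pser_repr phi b rho M.

Lemma pser_repr_remainder K h : `|h| <= rho ->
  `|phi h - \sum_(m < K.+1) b m * h ^+ m| <= M * (`|h| / rho) ^+ K.+1.
Proof.
case: phi_pser => rho0 bound sum_cvg hr.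
set P := fun N => \sum_(m < N.+1) b m * h ^+ m.
set q := `|h| / rho.
have q0 : 0 <= q by rewrite divr_ge0 // ltW.
have Hw : `|P N - P K| @[N --> \oo] --> `|phi h - P K|.
  by apply: cvg_norm; apply: cvgB; [exact: sum_cvg | exact: cvg_cst].
apply: (closed_cvg _ (@closed_le _ (M * q ^+ K.+1)) _ _ Hw).
near=> N.
have KN : (K <= N)%N by near: N; exact: nbhs_infty_ge.
rewrite /= /P -!(big_mkord xpredT (fun m => b m * h ^+ m)).
rewrite (big_cat_nat _ (n:=K.+1)) //= addrC addrK.
apply: (le_trans (ler_norm_sum _ _ _)).
apply: (@le_trans _ _ (\sum_(K.+1 <= m < N.+1) (`|b m| * rho ^+ m) * q ^+ K.+1)).
  rewrite big_nat [X in _ <= X]big_nat; apply: ler_sum => m /andP[Km _].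
  rewrite normrM normrX -mulrA ler_wpM2l //.
  have -> : `|h| = rho * q by rewrite /q mulrC divfK // gt_eqF.
  rewrite exprMn; apply: ler_wpM2l; first exact: exprn_ge0 (ltW rho0).
  by apply: ler_wiXn2l => //; rewrite ler_pdivrMr // mul1r.
rewrite -big_distrl /= ler_wpM2r ?exprn_ge0 //.
apply: (le_trans _ (bound N)); rewrite -(big_mkord xpredT (fun m => `|b m| * rho ^+ m)).
rewrite (big_cat_nat _ (n:=K.+1) (m:=0) (p:=N.+1)) //= lerDr.
by apply: sumr_ge0 => m _; rewrite mulr_ge0 ?exprn_ge0 // ltW.
Unshelve. all: by end_near.
Qed.

Lemma pser_repr_bound_ge0 : 0 <= M.
Proof.
case: phi_pser => _ bound _; apply: le_trans (bound 0%N).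
by rewrite big_ord1 mulr_ge0 ?exprn_ge0 // ltW; case: phi_pser.
Qed.

Lemma pser_repr_coef0 : b 0%N = phi 0.
Proof.
have rho0 : 0 <= rho by case: phi_pser => /ltW.
have := @pser_repr_remainder 0%N 0; rewrite normr0 => /(_ rho0).
by rewrite mul0r expr0n mulr0 big_ord1 expr0 mulr1 normr_le0 subr_eq0 => /eqP.
Qed.

Lemma pser_repr_linear h : `|h| <= rho ->
  `|phi h - phi 0 - b 1%N * h| <= M / rho ^+ 2 * `|h| ^+ 2.
Proof.
move=> hr; have := @pser_repr_remainder 1 h hr.
rewrite big_ord_recr big_ord1 /= expr0 mulr1 expr1 pser_repr_coef0 opprD addrA.
by rewrite expr_div_n mulrA mulrAC.
Qed.

Lemma pser_repr_const_left (c e : R) : 0 < e ->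
  (forall h, - e < h < 0 -> phi h = c) -> forall h, `|h| <= rho -> phi h = c.
Proof.
move=> e0 phi_c; have rho0 : 0 < rho by case: phi_pser.
pose cst m := if m is 0 then c else 0.
have sum_cst K h : \sum_(m < K.+1) cst m * h ^+ m = c.
  by rewrite big_ord_recl expr0 mulr1 big1 ?addr0 // => k _; rewrite mul0r.
(* Knowing b k = cst k for k < m, the order-m remainder at h = -u gives |b m - cst m| = O(u). *)
have coef m : b m = cst m.
  elim/ltn_ind: m => m IH; apply/eqP; rewrite -subr_eq0 -normr_le0.
  have e'0 : 0 < Num.min rho e by rewrite lt_min rho0 e0.
  apply: (@le0_of_le_linear _ _ (M / rho ^+ m.+1) _ e'0) => u /andP[u0].
  rewrite lt_min => /andP[ur ue].
  have hr : `|- u| <= rho by rewrite normrN gtr0_norm ?ltW.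
  have := @pser_repr_remainder m (- u) hr.
  rewrite phi_c ?oppr_lt0 ?ltrN2 ?u0 ?ue // normrN (gtr0_norm u0).
  have -> : \sum_(k < m.+1) b k * (- u) ^+ k = c - (cst m - b m) * (- u) ^+ m.
    rewrite big_ord_recr /= -(sum_cst m (- u)) big_ord_recr /=.
    under eq_bigr => k _ do rewrite IH //.
    ring.
  rewrite opprB addrC subrK normrM normrX normrN (gtr0_norm u0) distrC.
  rewrite expr_div_n exprS mulrA -ler_pdivlMr ?exprn_gt0 //.
  suff -> : M * (u * u ^+ m) / rho ^+ m.+1 / u ^+ m = M / rho ^+ m.+1 * u by [].
  by field; rewrite !expf_neq0 ?gt_eqF.
case: phi_pser => _ _ sum_cvg h /sum_cvg.
have -> : (fun N => \sum_(m < N.+1) b m * h ^+ m) = fun=> c.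
  by apply: funext => N; under eq_bigr do rewrite coef; exact: sum_cst.
by move=> /(cvg_lim (@Rhausdorff R)) <-; rewrite lim_cst.
Qed.
End Representation.

Lemma power_series_const (phi : R -> R) (a z c : R) :
  (forall s, a < s -> power_series_at phi s) -> a < z ->
  (forall s, a < s < z -> phi s = c) -> forall s, a < s -> phi s = c.
Proof.
move=> phi_an az phi_c s1 as1; apply: contrapT => phi_s1.
(* The local identity at S = sup A pushes the constancy interval beyond S. *)
pose A := [set s | z <= s /\ forall s', a < s' < s -> phi s' = c].
have Az : A z by split.
have A_s1 : ubound A s1.
  move=> s [_ As]; rewrite leNgt; apply/negP => s1s.
  by apply: phi_s1; apply: As; rewrite as1.
have hA : has_sup A by split; [exists z | exists s1].
pose S := sup A.
have zS : z <= S := sup_upper_bound hA Az.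
have below s' : a < s' < S -> phi s' = c.
  move=> /andP[as' s'S].
  have S's0 : 0 < S - s' by rewrite subr_gt0.
  have [s [_ As] s's] := @sup_adherent _ A (S - s') S's0 hA.
  by apply: As; rewrite as' /=; move: s's; rewrite opprB addrC subrK.
have [b [rho [M pser]]] := phi_an S (lt_le_trans az zS).
have rho0 : 0 < rho by case: pser.
have aS : 0 < S - a by rewrite subr_gt0 (lt_le_trans az).
have near_S h : `|h| <= rho -> phi (S + h) = c.
  apply: (pser_repr_const_left pser aS) => u /andP[au u0].
  by apply: below; rewrite gtrDl u0 andbT -ltrBlDl -opprB.
have : A (S + rho).
  split => [|s' /andP[as' s'Sr]]; first by rewrite (le_trans zS) ?lerDl ?ltW.
  have [s'S | Ss'] := ltP s' S; first by rewrite below ?as'.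
  rewrite -(subrKC S s') near_S // ger0_norm ?subr_ge0 //.
  by rewrite lerBlDl ltW.
by move=> /(sup_upper_bound hA); rewrite -/S gerDl leNgt rho0.
Qed.
End PowerSeries.

Section Axis.
Variables (R : realType) (n : nat).
Local Open Scope classical_set_scope.

Definition shift (x : 'I_n -> R) (j : 'I_n) (s : R) : 'I_n -> R :=
  fun k => x k + (if k == j then s else 0).

Lemma shiftD (x : 'I_n -> R) j s h : shift (shift x j s) j h = shift x j (s + h).
Proof. by apply: funext => k; rewrite /shift; case: ifP; rewrite ?addr0 // addrA. Qed.

Lemma pser_partial_axis (c : ('I_n -> nat) -> R) (j : 'I_n) (h : R) N :
  pser_partial c (fun k => if k == j then h else 0) N =
  \sum_(m < N.+1) c (fun k => if k == j then (m : nat) else 0%N) * h ^+ m.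
Proof.
rewrite /pser_partial (partition_big (fun a : {ffun 'I_n -> 'I_N.+1} => a j) xpredT) //=.
apply: eq_bigr => m _.
pose e : {ffun 'I_n -> 'I_N.+1} := [ffun k => if k == j then m else ord0].
have ej : e j = m by rewrite ffunE eqxx.
have ek k : k != j -> e k = ord0 by move=> kj; rewrite ffunE (negbTE kj).
have sum_e : (\sum_k (e k : nat) = m)%N.
  by rewrite (bigD1 j) //= ej big1 ?addn0 // => k /ek ->.
rewrite (bigD1 e) /=; last by rewrite sum_e -ltnS ltn_ord ej eqxx.
rewrite [X in _ + X]big1 ?addr0.
  have -> : (fun k => (e k : nat)) = (fun k => if k == j then (m : nat) else 0%N).
    by apply: funext => k; case: (eqVneq k j) => [->|kj]; rewrite ?ej ?ek.
  congr (_ * _); rewrite (bigD1 j) //= eqxx ej big1 ?mulr1 // => k kj.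
  by rewrite (negbTE kj) ek.
move=> a /andP[/andP[_ /eqP ajm] a_e].
case: (boolP [exists k, (k != j) && ((a k : nat) != 0%N)]).
  move=> /existsP[k /andP[kj ak]].
  by rewrite (bigD1 k) //= (negbTE kj) expr0n (negbTE ak) mul0r mulr0.
move=> /existsPn a0; case/eqP: a_e; apply/ffunP => k.
case: (eqVneq k j) => [->|kj]; first by rewrite ej ajm.
by rewrite ek //; apply/val_inj; move: (a0 k); rewrite kj negbK => /eqP.
Qed.

Lemma pser_abs_partial_axis (c : ('I_n -> nat) -> R) (j : 'I_n) (h : R) N :
  pser_abs_partial c (fun k => if k == j then h else 0) N =
  \sum_(m < N.+1) `|c (fun k => if k == j then (m : nat) else 0%N)| * `|h| ^+ m.
Proof.
rewrite -(pser_partial_axis (fun a => `|c a|)); apply: eq_bigr => a _.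
by congr (_ * _); apply: eq_bigr => k _; case: ifP; rewrite ?normr0.
Qed.

Lemma real_analytic_at_shift (g : ('I_n -> R) -> R) (x : 'I_n -> R) (j : 'I_n) :
  pos_vec x -> real_analytic_at g x ->
  exists b rho M, pser_repr (fun h => g (shift x j h)) b rho M.
Proof.
move=> xpos [r r0 [c g_pser]].
pose rho := Num.min r (x j) / 2.
have rho0 : 0 < rho by rewrite divr_gt0 // lt_min r0 xpos.
have : rho < Num.min r (x j).
  by rewrite /rho ltr_pdivrMr // ltr_pMr ?lt_min ?r0 ?xpos // ltr1n.
rewrite lt_min => /andP[rho_r rho_x].
have axis h : `|h| <= rho ->
    (exists M, forall N, pser_abs_partial c (fun k => if k == j then h else 0) N <= M) /\
    (pser_partial c (fun k => if k == j then h else 0) N @[N --> \oo]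
      --> g (shift x j h)).
  move=> hr; have E : (fun k => shift x j h k - x k) = (fun k => if k == j then h else 0).
    by apply: funext => k; rewrite /shift addrC addKr.
  rewrite -E; apply: g_pser => k; rewrite ?E /shift; case: eqP => [->|_].
  - by move: hr; rewrite ler_norml => /andP[hr _]; lra.
  - by rewrite addr0.
  - by rewrite addrC addKr (le_lt_trans hr).
  - by rewrite addr0 subrr normr0.
have rho_rho : `|rho| <= rho by rewrite ger0_norm // ltW.
have [[M bound] _] := axis rho rho_rho.
exists (fun m => c (fun k => if k == j then (m : nat) else 0%N)), rho, M; split => //.
  by move=> N; have := bound N; rewrite pser_abs_partial_axis ger0_norm // ltW.
move=> h /axis[_]; apply: cvg_trans; apply: near_eq_cvg; near=> N.
by rewrite pser_partial_axis.
Unshelve. all: by end_near.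
Qed.
End Axis.

Section Homogeneous.
Variables (R : realType) (n : nat) (f : ('I_n -> R) -> ('I_n -> R)).
Hypotheses (f_mono : order_preserving f) (f_hom : homogeneous f).

Lemma homogeneous_scale_le (c : R) (u v : 'I_n -> R) i :
  0 < c -> pos_vec u -> pos_vec v -> vle (fun k => c * u k) v -> c * f u i <= f v i.
Proof.
move=> c0 u_pos v_pos cuv; rewrite -[c * _]/((fun k => c * f u k) i) -f_hom //.
by apply: f_mono => // k; rewrite mulr_gt0.
Qed.

End Homogeneous.

Section CoordinateLine.
Local Open Scope classical_set_scope.
Variables (R : realType) (n : nat) (f : ('I_n -> R) -> ('I_n -> R)).
Hypotheses (f_pos : forall x, pos_vec x -> pos_vec (f x)) (f_mono : order_preserving f)
  (f_hom : homogeneous f) (f_an : real_analytic f) (f_mc : mult_convex f).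
Variables (x : 'I_n -> R) (i j : 'I_n).
Hypothesis x_pos : pos_vec x.

Local Notation jac := (Defs.jacobian f x i j).

Definition psi (s : R) : R := f (shift x j s) i.

Definition G (t : R) : R := psi (x j * (expR t - 1)).

Lemma shift_pos s : - x j < s -> pos_vec (shift x j s).
Proof.
by move=> xs k; rewrite /shift; case: eqP => [->|_]; rewrite ?addr0 -?ltrBlDl ?sub0r.
Qed.

Lemma psi_homo s s' : - x j < s -> s <= s' -> psi s <= psi s'.
Proof.
move=> xs ss'; apply: f_mono => [||k]; first exact: shift_pos.
  exact/shift_pos/(lt_le_trans xs).
by rewrite /shift; case: ifP; rewrite ?lerD2l.
Qed.

Lemma shift_expR t : shift x j (x j * (expR t - 1)) = fun k => x k * exp_unit j t k.
Proof.
apply: funext => k; rewrite /shift /exp_unit.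
by case: eqP => [->|_]; rewrite ?addr0 ?mulr1 // mulrBr mulr1 addrC subrK.
Qed.

Lemma G_pos t : 0 < G t.
Proof.
rewrite /G /psi shift_expR; apply: f_pos => k.
by rewrite /exp_unit mulr_gt0 //; case: ifP; rewrite ?expR_gt0.
Qed.

Lemma xj_expR_gt t : - x j < x j * (expR t - 1).
Proof. by rewrite mulrBr mulr1 ltrBrDl subrr mulr_gt0 ?expR_gt0. Qed.

Lemma G_homo : {homo G : s t / s <= t}.
Proof.
move=> s t st; apply: psi_homo; first exact: xj_expR_gt.
by apply: ler_wpM2l; [exact: ltW | rewrite lerD2r ler_expR].
Qed.

Lemma G0_psi : G 0 = psi 0.
Proof. by rewrite /G expR0 subrr mulr0. Qed.

Lemma psi_G s : - x j < s -> psi s = G (ln (1 + s / x j)).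
Proof.
move=> xs; have xj0 : x j != 0 by rewrite gt_eqF.
rewrite /G lnK ?posrE; last by rewrite -(divff xj0) -mulrDl divr_gt0 // -ltrBlDl sub0r.
by rewrite addrC addKr mulrC divfK.
Qed.

Lemma lnG_convex : convex_fun (fun t => ln (G t)).
Proof.
have E t : (fun k => x k * exp_unit j t k) =
    fun k => expR (ln (x k) + (if k == j then t else 0)).
  by apply: funext => k; rewrite expRD lnK ?posrE // /exp_unit; case: ifP; rewrite ?expR0.
move=> s t l l01; rewrite /G /psi !shift_expR !E.
have -> : (fun k => expR (ln (x k) + (if k == j then l * s + (1 - l) * t else 0))) =
    fun k => expR (l * (ln (x k) + (if k == j then s else 0)) +
                   (1 - l) * (ln (x k) + (if k == j then t else 0))).
  by apply: funext => k; congr expR; case: ifP => _; ring.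
exact: f_mc.
Qed.

Lemma psi_power_series s : - x j < s -> power_series_at psi s.
Proof.
move=> xs; have x_s := shift_pos xs.
have [b [rho [M pser]]] := real_analytic_at_shift j x_s (f_an i x_s).
by exists b, rho, M; under eq_fun do rewrite /psi -shiftD.
Qed.

Lemma psi_taylor1 : exists rho K, [/\ 0 < rho, 0 <= K &
  forall h, `|h| <= rho -> `|psi h - psi 0 - jac * h| <= K * `|h| ^+ 2].
Proof.
have [b [rho [M pser]]] : power_series_at psi 0 by apply: psi_power_series; rewrite oppr_lt0.
have E : (fun h => psi (0 + h)) = psi by apply: funext => h; rewrite add0r.
rewrite E in pser; have rho0 : 0 < rho by case: pser.
have lin := pser_repr_linear pser.
have -> : jac = b 1%N := derive1_quadratic_bound rho0 lin.
exists rho, (M / rho ^+ 2); split => //.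
by rewrite divr_ge0 ?(pser_repr_bound_ge0 pser) // exprn_ge0 // ltW.
Qed.

Lemma exp_unit_gt0 (t : R) k : 0 < exp_unit j t k.
Proof. by rewrite /exp_unit; case: ifP; rewrite ?expR_gt0. Qed.

Lemma G_le_f_exp_unit : exists2 c : R, 0 < c & forall t, c * G t <= f (exp_unit j t) i.
Proof.
have x_ge0 k : 0 <= x k by exact: ltW.
have S0 : 0 < \sum_k x k by apply: lt_le_trans (x_pos j) (ler_term_sum x_ge0 j).
exists (\sum_k x k)^-1; rewrite ?invr_gt0 // => t.
rewrite /G /psi shift_expR; apply: homogeneous_scale_le; rewrite ?invr_gt0 // => k.
- by rewrite mulr_gt0 ?exp_unit_gt0.
- exact: exp_unit_gt0.
- rewrite mulrA ler_piMl ?(ltW (exp_unit_gt0 _ _)) // mulrC ler_pdivrMr // mul1r.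
  exact: ler_term_sum.
Qed.

Lemma f_exp_unit_le_G : exists2 c : R, 0 < c & forall t, c * f (exp_unit j t) i <= G t.
Proof.
have xV_ge0 k : 0 <= (x k)^-1 by rewrite invr_ge0 ltW.
have S0 : 0 < \sum_k (x k)^-1.
  by apply: lt_le_trans (ler_term_sum xV_ge0 j); rewrite invr_gt0.
exists (\sum_k (x k)^-1)^-1; rewrite ?invr_gt0 // => t.
rewrite /G /psi shift_expR; apply: homogeneous_scale_le; rewrite ?invr_gt0 // => k.
- exact: exp_unit_gt0.
- by rewrite mulr_gt0 ?exp_unit_gt0.
- rewrite ler_pM2r ?exp_unit_gt0 // -[x k]invrK lef_pV2 ?posrE ?invr_gt0 //.
  exact: ler_term_sum.
Qed.

Lemma arcG_iff_G_cvgy : arcG f i j <-> G t @[t --> +oo] --> +oo.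
Proof.
have [c c0 cG] := G_le_f_exp_unit; have [c' c'0 c'f] := f_exp_unit_le_G.
split => [arc | Gy].
- by apply: (ger_cvgy _ (gt0_cvgMry c'0 arc)); apply: nearW.
- by apply: (ger_cvgy _ (gt0_cvgMry c0 Gy)); apply: nearW.
Qed.

Lemma jacobian_neq0_G_increases : jac != 0 -> exists2 t, 0 < t & G 0 < G t.
Proof.
move=> jac_neq0; apply: contrapT => G_flat; move/eqP: jac_neq0; apply.
have [rho [K [rho0 _ taylor]]] := psi_taylor1.
apply/eqP; rewrite -normr_le0; apply: (@le0_of_le_linear _ _ K rho rho0) => h /andP[h0 hr].
have xh : - x j < h by rewrite (lt_trans _ h0) // oppr_lt0.
have psi_h : psi h = psi 0.
  apply/le_anti/andP; split; last by apply: psi_homo; rewrite ?oppr_lt0 ?ltW.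
  rewrite psi_G // -G0_psi leNgt; apply/negP => lt; apply: G_flat.
  by exists (ln (1 + h / x j)) => //; rewrite ln_gt0 // ltrDl divr_gt0.
have := taylor h; rewrite psi_h subrr sub0r normrN normrM (gtr0_norm h0).
by rewrite expr2 mulrA ler_pM2r //; apply; exact: ltW.
Qed.

Lemma lnG_homo : {homo (fun t => ln (G t)) : s t / s <= t}.
Proof. by move=> s t st; rewrite /= ler_ln ?posrE ?G_pos ?G_homo. Qed.

Lemma jacobian0_lnG_flat : jac = 0 ->
  exists K e, 0 < e /\ forall h, 0 < h < e -> ln (G h) - ln (G 0) <= K * h ^+ 2.
Proof.
move=> jac0; have [rho [K [rho0 K0 taylor]]] := psi_taylor1; rewrite jac0 in taylor.
have xe0 : 0 < x j * expR 1 by rewrite mulr_gt0 ?expR_gt0.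
exists (K * (x j * expR 1) ^+ 2 / G 0), (Num.min 1 (rho / (x j * expR 1))).
split => [|h /andP[h0]]; first by rewrite lt_min ltr01 divr_gt0.
rewrite lt_min ltr_pdivlMr // => /andP[h1 hrho].
pose s := x j * (expR h - 1).
have s0 : 0 <= s.
  apply: mulr_ge0; first exact: ltW.
  by rewrite subr_ge0 (le_trans _ (expR_ge1Dx h)) // lerDl ltW.
have s_le : s <= x j * expR 1 * h.
  rewrite /s -mulrA; apply: ler_wpM2l; first exact: ltW.
  apply: le_trans (expR_sub1_le h) _; rewrite mulrC.
  by apply: ler_wpM2r; [exact: ltW | rewrite ler_expR ltW].
have s_rho : `|s| <= rho by rewrite ger0_norm // (le_trans s_le) // mulrC ltW.
apply: le_trans (ln_sub_le (G_pos h) (G_pos 0)) _.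
rewrite mulrAC ler_pM2r ?invr_gt0 ?G_pos // -mulrA -exprMn G0_psi.
change (psi s - psi 0 <= K * (x j * expR 1 * h) ^+ 2).
apply: le_trans (ler_norm _) _.
have := taylor s s_rho; rewrite mul0r subr0 => /le_trans; apply.
rewrite ler_wpM2l // ger0_norm //.
by apply: lerXn2r; rewrite ?nnegrE // mulr_ge0 ?ltW.
Qed.

Lemma jacobian0_psi_const : jac = 0 ->
  forall s, - x j < s -> psi s = psi 0.
Proof.
move=> /jacobian0_lnG_flat[K [e [e0 flat]]].
have lnG_left := convex_flat_left lnG_convex lnG_homo e0 flat.
apply: (@power_series_const _ psi (- x j) 0); first exact: psi_power_series.
  by rewrite oppr_lt0.
move=> s /andP[xs s0]; rewrite psi_G // -G0_psi; apply: ln_inj; rewrite ?posrE ?G_pos //.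
apply: lnG_left; apply: ln_le0; rewrite gerDl ler_pdivrMr // mul0r; exact: ltW.
Qed.

Lemma arcG_iff_jacobian_neq0 : arcG f i j <-> jac != 0.
Proof.
apply: iff_trans arcG_iff_G_cvgy _; split => [Gy | jac_neq0].
- apply/eqP => /jacobian0_psi_const psi_const.
  have G_const t : G t = psi 0 by apply: psi_const; exact: xj_expR_gt.
  by move: Gy => /cvgryPge/(_ (psi 0 + 1))/filter_ex[t]; rewrite G_const; lra.
- have [t t0 G0t] := jacobian_neq0_G_increases jac_neq0.
  have lnG0t : ln (G 0) < ln (G t) by rewrite ltr_ln ?posrE ?G_pos.
  have lnGy := convex_cvgy lnG_convex t0 lnG0t.
  apply: ger_cvgy lnGy; apply: nearW => t'.
  by rewrite -{2}[G t']lnK ?posrE ?G_pos // (le_trans _ (expR_ge1Dx _)) ?lerDr.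
Qed.

End CoordinateLine.

Theorem lemma4p9 (R : realType) (n : nat) (f : ('I_n -> R) -> ('I_n -> R)) :
  (forall x, pos_vec x -> pos_vec (f x)) ->
  order_preserving f -> homogeneous f -> real_analytic f -> mult_convex f ->
  forall x, pos_vec x -> forall i j : 'I_n, arcG f i j <-> arcJ f x i j.
Proof.
move=> f_pos f_mono f_hom f_an f_mc x x_pos i j.
exact: arcG_iff_jacobian_neq0.
Qed.
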